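(* For every mad family $\mathcal A$ on $\omega$, $\omega^{\mathfrak t}$ is relatively countably compact in $\Psi(\mathcal A)^{\mathfrak t}$; consequently $\Psi(\mathcal A)$ is $(\mathfrak t,\omega^* )$-pseudocompact.
   Context: An almost disjoint family is an infinite family $\mathcal A$ of infinite subsets of $\omega$ with pairwise finite intersections; a mad family is a maximal one under inclusion. $\Psi(\mathcal A)=\mathcal A\cup\omega$, where points of $\omega$ are isolated and each $A\in\mathcal A$ has local base $\{\{A\}\cup(A\setminus n):n\in\omega\}$. $\mathfrak t$ is the tower number: the least $\kappa$ such that there is a $\subseteq^*$-decreasing family $\{A_\alpha:\alpha<\kappa\}$ of infinite subsets of $\omega$ with no infinite pseudo-intersection. A subset $Y$ of a space $Z$ is relatively countably compact in $Z$ if every countably infinite subset of $Y$ has an accumulation point in $Z$. $\omega^*$ is the set of free ultrafilters on $\omega$. For $p\in\omega^*$ and a sequence $(B_n)$ of subsets of $X$, $x$ is a $p$-limit of $(B_n)$ if $\{n:V\cap B_n\ne\emptyset\}\in p$ for every neighborhood $V$ of $x$. $X$ is $(\kappa,\omega^* )$-pseudocompact if for every family $\{(V^\alpha_n:n\in\omega):\alpha<\kappa\}$ of sequences of nonempty open subsets of $X$ there is $p\in\omega^*$ such that each $(V^\alpha_n:n\in\omega)$ has a $p$-limit point in $X$. *)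

From mathcomp Require Import all_boot.
From mathcomp Require Import boolp classical_sets cardinality.

Set Implicit Arguments.
Unset Strict Implicit.
Unset Printing Implicit Defensive.

Local Open Scope classical_set_scope.

Definition almost_disjoint_family (AA : set (set nat)) : Prop :=
  infinite_set AA /\
  (forall A, AA A -> infinite_set A) /\
  (forall A B, AA A -> AA B -> A <> B -> finite_set (A `&` B)).

Definition mad_family (AA : set (set nat)) : Prop :=
  almost_disjoint_family AA /\
  (forall BB, almost_disjoint_family BB -> AA `<=` BB -> BB = AA).

Inductive psi_pt (AA : set (set nat)) : Type :=
  | PN : nat -> psi_pt AA
  | PA : forall A : set nat, AA A -> psi_pt AA.

(* points of omega are isolated; A has local base {A} u (A \ n) *)
Definition psi_open (AA : set (set nat)) (U : set (psi_pt AA)) : Prop :=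
  forall (A : set nat) (hA : AA A), U (PA hA) ->
    exists n : nat, forall k : nat, A k -> (n <= k)%N -> U (PN AA k).

Definition product_open (X : Type) (openX : set X -> Prop) (I : Type)
    (U : set (I -> X)) : Prop :=
  forall f, U f ->
    exists (F : set I) (V : I -> set X),
      finite_set F /\
      (forall i, F i -> openX (V i) /\ V i (f i)) /\
      (forall g, (forall i, F i -> V i (g i)) -> U g).

Arguments product_open {X} openX I U.

Definition acc_point (T : Type) (openT : set T -> Prop) (S : set T) (x : T) :=
  forall U, openT U -> U x -> exists y, S y /\ y <> x /\ U y.

Definition rel_countably_compact (T : Type) (openT : set T -> Prop)
    (Y : set T) : Prop :=
  forall S : set T, S `<=` Y -> countable S -> infinite_set S ->
    exists x : T, acc_point openT S x.

Definition omega_pow (AA : set (set nat)) (I : Type) : set (I -> psi_pt AA) :=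
  [set f | forall i, exists n : nat, f i = PN AA n].

Definition ultrafilter_on_nat (p : set (set nat)) : Prop :=
  p setT /\ ~ p set0 /\
  (forall B C, p B -> B `<=` C -> p C) /\
  (forall B C, p B -> p C -> p (B `&` C)) /\
  (forall B, p B \/ p (~` B)).

Definition free_ultrafilter (p : set (set nat)) : Prop :=
  ultrafilter_on_nat p /\ (forall B, finite_set B -> ~ p B).

Definition p_limit (T : Type) (openT : set T -> Prop) (p : set (set nat))
    (B : nat -> set T) (x : T) : Prop :=
  forall W, openT W -> W x -> p [set n | W `&` B n !=set0].

(* (K, omega^* )-pseudocompactness, K given as an index type of size kappa *)
Definition kappa_ostar_pseudocompact (T : Type) (openT : set T -> Prop)
    (K : Type) : Prop :=
  forall V : K -> nat -> set T,
    (forall a n, openT (V a n) /\ V a n !=set0) ->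
    exists p, free_ultrafilter p /\
      forall a, exists x, p_limit openT p (V a) x.

Definition almost_sub (A B : set nat) : Prop := finite_set (A `\` B).

Definition strict_well_order (J : Type) (lt : J -> J -> Prop) : Prop :=
  (forall j, ~ lt j j) /\
  (forall i j k, lt i j -> lt j k -> lt i k) /\
  (forall i j, lt i j \/ i = j \/ lt j i) /\
  well_founded lt.

Definition is_tower (J : Type) (lt : J -> J -> Prop) (T : J -> set nat) : Prop :=
  strict_well_order lt /\
  (forall j, infinite_set (T j)) /\
  (forall j k, lt j k -> almost_sub (T k) (T j)) /\
  ~ (exists B : set nat, infinite_set B /\ forall j, almost_sub B (T j)).

Definition has_card_t (I : Type) : Prop :=
  (exists (J : Type) (lt : J -> J -> Prop) (T : J -> set nat),
      is_tower lt T /\ exists f : I -> J, bijective f) /\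
  (forall (J : Type) (lt : J -> J -> Prop) (T : J -> set nat),
      is_tower lt T -> exists f : I -> J, injective f).

Arguments omega_pow AA I _ : clear implicits.
Arguments kappa_ostar_pseudocompact {T} openT K.

(* Since AA is mad, every sequence in omega converges in Psi(AA) along some
   infinite subset of any given infinite index set: either to a value taken
   infinitely often, or to a point A of AA that meets the range in an infinite
   set.  Index t sequences by a well-order in which each index has fewer than t
   predecessors.  A transfinite recursion then builds a mod-finite decreasing
   chain of infinite sets N_b along which the b-th sequence converges: the
   fewer than t earlier sets always have an infinite pseudo-intersection, by
   the definition of t.  Every free ultrafilter p containing the chain makes
   all t sequences p-convergent.  This is (t, omega^* )-pseudocompactness, and
   for a countably infinite subset of omega^t the coordinatewise p-limit of an
   injective enumeration is an accumulation point. *)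

From Stdlib Require Import Wellfounded.
From mathcomp Require Import all_boot.
From mathcomp Require Import boolp classical_sets functions cardinality filter.

Set Implicit Arguments.
Unset Strict Implicit.

Local Open Scope classical_set_scope.

Lemma almost_sub_refl (A : set nat) : almost_sub A A.
Proof. by rewrite /almost_sub setDv; exact: finite_set0. Qed.

Lemma almost_subT (A : set nat) : almost_sub A setT.
Proof. by rewrite /almost_sub setDT; exact: finite_set0. Qed.

Lemma almost_sub_trans (A B C : set nat) :
  almost_sub A B -> almost_sub B C -> almost_sub A C.
Proof.
move=> AB BC; have : finite_set ((A `\` B) `|` (B `\` C)) by rewrite finite_setU.
apply: sub_finite_set => n [An nC].
by have [Bn|nB] := pselect (B n); [right|left].
Qed.

Lemma sub_almost_sub (A B C : set nat) :
  A `<=` B -> almost_sub B C -> almost_sub A C.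
Proof. by move=> AB; apply: sub_finite_set => n [/AB]. Qed.

Lemma almost_subI (A X Y : set nat) :
  almost_sub A X -> almost_sub A Y -> almost_sub A (X `&` Y).
Proof. by rewrite /almost_sub setDIr finite_setU. Qed.

Lemma infinite_set_ge (A : set nat) (m : nat) :
  infinite_set A -> exists k, A k /\ (m <= k)%N.
Proof.
move=> /infinite_setD /(_ (finite_II m)) /infinite_setN0 [k [Ak /= km]].
by exists k; rewrite leqNgt; split => //; apply/negP.
Qed.

Lemma mad_infinite_meet (AA : set (set nat)) (D : set nat) :
  mad_family AA -> infinite_set D -> exists2 A, AA A & infinite_set (A `&` D).
Proof.
move=> [[AAinf [AAel AAdis]] AAmax] Dinf; apply: contrapT => no_meet.
have meet_fin A : AA A -> finite_set (A `&` D).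
  by move=> AA_A; apply: contrapT => ADinf; apply: no_meet; exists A.
have adD : almost_disjoint_family (AA `|` [set D]).
  split; first by apply: sub_infinite_set AAinf => A; left.
  split; first by move=> A [/AAel|->].
  move=> A B [AA_A|->] [AA_B|->] AB //; first exact: AAdis.
  - exact: meet_fin.
  - by rewrite setIC; exact: meet_fin.
have AA_D : AA D by rewrite -(AAmax _ adD (@subsetUl _ AA [set D])); right.
by apply: Dinf; rewrite -(setIid D); exact: meet_fin.
Qed.

Lemma wf_fixpoint (J X : Type) (lt : J -> J -> Prop) (x0 : X)
    (step : J -> (J -> X) -> X) :
  well_founded lt ->
  (forall b N N', (forall c, lt c b -> N c = N' c) -> step b N = step b N') ->
  exists N : J -> X, forall b, N b = step b N.
Proof.
move=> wf step_ext.
pose F b (rec : forall c, lt c b -> X) :=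
  step b (fun c => if pselect (lt c b) is left cb then rec c cb else x0).
have F_ext b rec rec' : (forall c cb, rec c cb = rec' c cb) -> F b rec = F b rec'.
  by move=> recE; apply: step_ext => c cb; case: pselect.
exists (Fix wf (fun _ => X) F) => b; rewrite (Fix_eq _ _ _ F_ext).
by apply: step_ext => c cb; case: pselect.
Qed.

(* With [I] of size [t]: [b] has fewer than [t] predecessors. *)
Definition small_segment (I : Type) {J : Type} (lt : J -> J -> Prop) (b : J) :=
  ~ exists h : I -> {c | lt c b}, injective h.

Lemma sval_inj (J : Type) (P : J -> Prop) : injective (@sval J P).
Proof. by move=> u v; apply: eq_sig_hprop => x p q; exact: Prop_irrelevance. Qed.

Section SmallSegmentChain.
Variables (I J : Type) (lt : J -> J -> Prop).
Hypothesis cardI : has_card_t I.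
Hypothesis lt_wo : strict_well_order lt.

Lemma small_segment_lt (b c : J) :
  lt c b -> small_segment I lt b -> small_segment I lt c.
Proof.
have [_ [lt_trans _]] := lt_wo.
move=> cb small_b [h h_inj]; apply: small_b.
exists (fun i => exist _ (sval (h i)) (lt_trans _ _ _ (svalP (h i)) cb)).
by move=> i j /(congr1 sval) /= /sval_inj /h_inj.
Qed.

Lemma small_segment_pseudo_intersection (b : J) (N : J -> set nat) :
  small_segment I lt b ->
  (forall c, lt c b -> infinite_set (N c)) ->
  (forall c d, lt c b -> lt d c -> almost_sub (N c) (N d)) ->
  exists2 B, infinite_set B & forall c, lt c b -> almost_sub B (N c).
Proof.
have [lt_irr [lt_trans [lt_total lt_wf]]] := lt_wo.
move=> small_b Ninf Ndec; apply: contrapT => no_pseudo; apply: small_b.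
pose ltb (u v : {c | lt c b}) := lt (sval u) (sval v).
have ltb_wo : strict_well_order ltb.
  split; first by move=> u; exact: lt_irr.
  split; first by move=> u v w; exact: lt_trans.
  split; last exact: wf_inverse_image.
  move=> u v; case: (lt_total (sval u) (sval v)) => [uv|[/sval_inj uv|vu]].
  + by left.
  + by right; left.
  + by right; right.
have [_ embed] := cardI; apply: (embed _ ltb (fun u => N (sval u))).
split=> //; split; first by move=> u; exact: Ninf (svalP u).
split; first by move=> u v; exact: Ndec (svalP v).
move=> [B [Binf Bsub]]; apply: no_pseudo; exists B => // c cb.
exact: (Bsub (exist _ c cb)).
Qed.

Variable P : J -> set nat -> Prop.
Hypothesis P_dense :
  forall b B, infinite_set B -> exists2 C, C `<=` B & infinite_set C /\ P b C.

Definition refines (N : J -> set nat) (b : J) (C : set nat) :=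
  [/\ infinite_set C, forall c, lt c b -> almost_sub C (N c) & P b C].

Lemma exists_small_segment_chain :
  exists N : J -> set nat, forall b, small_segment I lt b -> refines N b (N b).
Proof.
have [_ [_ [_ lt_wf]]] := lt_wo.
have [N NE] : exists N : J -> set nat, forall b, N b = xget setT (refines N b).
  apply: (wf_fixpoint setT (step := fun b N => xget setT (refines N b)) lt_wf).
  move=> b N N' NN'; congr xget.
  apply/seteqP; split => C [Cinf Csub PC]; split => // c cb.
  - by rewrite -NN'//; exact: Csub.
  - by rewrite NN'//; exact: Csub.
exists N => b; elim/(well_founded_ind lt_wf): b => b IH small_b.
have refinesN c : lt c b -> refines N c (N c).
  by move=> cb; apply: IH cb (small_segment_lt cb small_b).
have [B Binf Bsub] : exists2 B, infinite_set B & forall c, lt c b -> almost_sub B (N c).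
  apply: small_segment_pseudo_intersection small_b _ _ => [c /refinesN[]//|c d cb].
  by case: (refinesN c cb) => _ + _; apply.
rewrite NE; apply: xgetPex.
have [C CB [Cinf PC]] := P_dense b Binf.
by exists C; split => // c cb; exact: sub_almost_sub CB (Bsub c cb).
Qed.

End SmallSegmentChain.

(* The well-order of a tower need not have order type [t]; cutting it at the
   first point with [t] predecessors yields one whose used points all have
   fewer than [t] predecessors. *)
Lemma exists_small_segment_embedding (I : Type) :
  has_card_t I ->
  exists (J : Type) (lt : J -> J -> Prop) (e : I -> J),
    [/\ strict_well_order lt, injective e & forall i, small_segment I lt (e i)].
Proof.
move=> [[J [lt [T [[lt_wo _] [f f_bij]]]]] _]; exists J, lt.
have [_ [lt_trans [_ lt_wf]]] := lt_wo.
have [[a not_small_a]|all_small] := pselect (exists a, ~ small_segment I lt a).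
- have [a0 [not_small_a0 below_small]] : exists a0,
      ~ small_segment I lt a0 /\ forall c, lt c a0 -> small_segment I lt c.
    apply: contrapT => no_min; apply: not_small_a.
    elim/(well_founded_ind lt_wf): a => a IH; apply: contrapT => not_small.
    by apply: no_min; exists a.
  have [h h_inj] := contrapT not_small_a0.
  exists (fun i => sval (h i)); split => //.
  + by move=> i j /sval_inj /h_inj.
  + by move=> i; apply: below_small (svalP (h i)).
- exists f; split => //; first exact: bij_inj.
  by move=> i; apply: contrapT => not_small; apply: all_small; exists (f i).
Qed.

Lemma almost_chain_ultrafilter (F : set (set nat)) :
  (forall X, F X -> infinite_set X) ->
  (forall X Y, F X -> F Y -> almost_sub X Y \/ almost_sub Y X) ->
  exists p : set_system nat,
    [/\ UltraFilter p, @frechet_filter nat `<=` p & F `<=` p].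
Proof.
move=> Finf Fchain; pose FT := F `|` [set setT].
have FTinf X : FT X -> infinite_set X.
  by case=> [/Finf //|->]; exact: infinite_nat.
have FTchain X Y : FT X -> FT Y -> almost_sub X Y \/ almost_sub Y X.
  case=> [FX|->]; last by right; exact: almost_subT.
  by case=> [FY|->]; [exact: Fchain|left; exact: almost_subT].
pose q := [set Y | exists2 X, FT X & almost_sub X Y].
have q_proper : ProperFilter q.
  apply: Build_ProperFilter_ex.
    move=> Y [X /FTinf Xinf XY].
    have /infinite_setN0 [n [Xn nXY]] := infinite_setD Xinf XY.
    by exists n; apply: contrapT => nY; exact: nXY.
  split.
  - by exists setT; [right|exact: almost_sub_refl].
  - move=> Y Z [X FTX XY] [X' FTX' XZ].
    have [XX'|X'X] := FTchain X X' FTX FTX'.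
    + by exists X => //; apply: almost_subI => //; exact: almost_sub_trans XZ.
    + by exists X' => //; apply: almost_subI => //; exact: almost_sub_trans XY.
  - move=> Y Z YZ [X FTX XY]; exists X => //.
    by apply: sub_finite_set XY => n [Xn nZ]; split => // /YZ.
have [p [pU qp]] := ultraFilterLemma q_proper.
exists p; split => // Y.
- by move=> cofinY; apply: qp; exists setT; [right|rewrite /almost_sub setTD].
- by move=> FY; apply: qp; exists Y; [left|exact: almost_sub_refl].
Qed.

Lemma frechet_ultrafilter_free (p : set_system nat) :
  UltraFilter p -> @frechet_filter nat `<=` p -> free_ultrafilter p.
Proof.
move=> pU pfree; split.
  split; first exact: filterT.
  split; first exact: filter_not_empty.
  split; first by move=> B C pB BC; exact: filterS pB.
  split; first by move=> B C; exact: filterI.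
  by move=> B; exact: in_ultra_setVsetC.
move=> B finB pB; apply: (filter_not_empty p); rewrite -(setICr B).
by apply: filterI pB _; apply: pfree; rewrite /frechet_filter /= setCK.
Qed.

Lemma filterS_almost (p : set_system nat) (C Y : set nat) :
  Filter p -> @frechet_filter nat `<=` p -> p C -> almost_sub C Y -> p Y.
Proof.
move=> pF pfree pC CY.
have pCY : p (~` (C `\` Y)) by apply: pfree; rewrite /frechet_filter /= setCK.
by apply: filterS (filterI pC pCY) => n [Cn nCY]; apply: contrapT => nY; exact: nCY.
Qed.

Lemma dense_families_ultrafilter (I : Type) (P : I -> set nat -> Prop) :
  has_card_t I ->
  (forall i B, infinite_set B -> exists2 C, C `<=` B & infinite_set C /\ P i C) ->
  exists p : set_system nat,
    [/\ UltraFilter p, @frechet_filter nat `<=` p & forall i, exists2 C, p C & P i C].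
Proof.
move=> cardI P_dense.
have [J [lt [e [lt_wo e_inj e_small]]]] := exists_small_segment_embedding cardI.
pose Q b C := forall i, e i = b -> P i C.
have Q_dense b B : infinite_set B -> exists2 C, C `<=` B & infinite_set C /\ Q b C.
  move=> Binf; have [[i <-]|no_i] := pselect (exists i, e i = b).
  - have [C CB [Cinf PC]] := P_dense i B Binf.
    by exists C => //; split => // j /e_inj ->.
  - by exists B => //; split => // i ei; case: no_i; exists i.
have [N chainN] := exists_small_segment_chain cardI lt_wo Q_dense.
have [_ [_ [lt_total _]]] := lt_wo.
have Ninf X : (N @` small_segment I lt) X -> infinite_set X.
  by move=> [b /chainN [] + _ _ <-].
have Nchain X Y : (N @` small_segment I lt) X -> (N @` small_segment I lt) Y ->
    almost_sub X Y \/ almost_sub Y X.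
  move=> [b /chainN [_ Nb _] <-] [c /chainN [_ Nc _] <-].
  case: (lt_total b c) => [bc|[<-|cb]].
  + by right; exact: Nc.
  + by left; exact: almost_sub_refl.
  + by left; exact: Nb.
have [p [pU pfree Np]] := almost_chain_ultrafilter Ninf Nchain.
exists p; split => // i; exists (N (e i)); first by apply: Np; exists (e i).
by have [_ _] := chainN _ (e_small i); apply.
Qed.

Section PsiSpace.
Variable AA : set (set nat).
Hypothesis AA_mad : mad_family AA.

Definition converges_along (g : nat -> nat) (C : set nat) (x : psi_pt AA) :=
  forall W, psi_open W -> W x -> almost_sub C [set n | W (PN AA (g n))].

Lemma psi_open_meets_omega (V : set (psi_pt AA)) :
  psi_open V -> V !=set0 -> exists k, V (PN AA k).
Proof.
have [[_ [AAinf _]] _] := AA_mad.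
move=> Vo [[k|A AA_A] Vx]; first by exists k.
have [m Vm] := Vo A AA_A Vx.
have [k [Ak mk]] := infinite_set_ge m (AAinf A AA_A).
by exists k; exact: Vm.
Qed.

Lemma exists_converges_along (g : nat -> nat) (B : set nat) :
  infinite_set B ->
  exists2 C, C `<=` B & infinite_set C /\ exists x, converges_along g C x.
Proof.
move=> Binf; pose fiber k := B `&` [set n | g n = k].
have [[k fiber_inf]|fibers_fin] := pselect (exists k, infinite_set (fiber k)).
  exists (fiber k); first by move=> n [].
  split=> //; exists (PN AA k) => W _ Wk; rewrite /almost_sub.
  by apply: sub_finite_set (finite_set0 nat) => n [[_ /= ->]].
have {}fibers_fin k : finite_set (fiber k).
  by apply: contrapT => fiber_inf; apply: fibers_fin; exists k.
have gB_inf : infinite_set (g @` B).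
  move=> gB_fin; apply: Binf.
  apply: sub_finite_set (bigcup_finite gB_fin (fun k _ => fibers_fin k)) => n Bn.
  by exists (g n); [exists n|split].
have [A AA_A AgB_inf] := mad_infinite_meet AA_mad gB_inf.
exists (B `&` [set n | A (g n)]); first by move=> n [].
split.
  move=> C_fin; apply: AgB_inf; apply: sub_finite_set (finite_image g C_fin).
  by move=> k [Ak [n Bn gn]]; exists n => //; split => //=; rewrite gn.
exists (PA AA_A) => W /(_ A AA_A) Wo /Wo [m Wm].
apply: sub_finite_set (bigcup_finite (finite_II m) (fun k _ => fibers_fin k)).
move=> n [[Bn Agn] /= nW]; exists (g n); last by split.
by rewrite /= ltnNge; apply/negP => mk; apply: nW; exact: Wm.
Qed.

Lemma psi_sequences_ultrafilter_limits (I : Type) (G : I -> nat -> nat) :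
  has_card_t I ->
  exists p : set_system nat,
    [/\ UltraFilter p, @frechet_filter nat `<=` p &
      forall i, exists x : psi_pt AA,
        forall W, psi_open W -> W x -> p [set n | W (PN AA (G i n))]].
Proof.
move=> cardI.
have [p [pU pfree conv_p]] := dense_families_ultrafilter cardI
  (fun i B Binf => exists_converges_along (G i) Binf).
exists p; split => // i; have [C pC [x Cx]] := conv_p i.
by exists x => W Wo Wx; exact: filterS_almost pfree pC (Cx W Wo Wx).
Qed.

End PsiSpace.

Lemma ultrafilter_limit_acc_point (X I : Type) (openX : set X -> Prop)
    (p : set_system nat) (h : nat -> I -> X) (x : I -> X) :
  ProperFilter p -> @frechet_filter nat `<=` p -> injective h ->
  (forall i W, openX W -> W (x i) -> p [set n | W (h n i)]) ->
  acc_point (product_open openX I) (range h) x.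
Proof.
move=> pF pfree h_inj hx U Uo Ux.
have [F [V [Ffin [FV VU]]]] := Uo x Ux.
have p_box : p [set n | forall i, F i -> V i (h n i)].
  have [D FD] := (@finite_fsetP {classic I} F).1 Ffin; rewrite FD in FV *.
  apply: (@filter_bigI _ {classic I} D (fun i => [set n | V i (h n i)])) => i iD.
  by have [Vo Vx] := FV i iD; exact: hx.
have p_ne : p [set n | h n <> x].
  apply: pfree; rewrite /frechet_filter /=.
  have [[m hm]|no_m] := pselect (exists m, h m = x).
  - apply: sub_finite_set (finite_set1 m) => n /= /contrapT hn.
    by apply: h_inj; rewrite hn hm.
  - apply: sub_finite_set (finite_set0 nat) => n /= /contrapT hn.
    by apply: no_m; exists n.
have [n [n_box n_ne]] := filter_ex (filterI p_box p_ne).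
by exists (h n); split; [exists n|split => //; exact: VU].
Qed.

Lemma infinite_set_injective_seq (T : Type) (S : set T) :
  infinite_set S -> exists2 h : nat -> T, injective h & range h `<=` S.
Proof.
elim/Ppointed: T => T in S *; first by rewrite emptyE => /(_ (finite_set0 _)).
move=> /infiniteP /ppcard_leP [f]; exists f.
  by move=> m n; apply: inj; rewrite ?inE.
by move=> _ [n _ <-]; apply: funS.
Qed.

Lemma omega_pow_rel_countably_compact (AA : set (set nat)) (I : Type) :
  mad_family AA -> has_card_t I ->
  rel_countably_compact (product_open (@psi_open AA) I) (omega_pow AA I).
Proof.
move=> AA_mad cardI S SY _ Sinf.
have [h h_inj hS] := infinite_set_injective_seq Sinf.
have /choice [G hG] : forall i, exists g : nat -> nat, forall n, h n i = PN AA (g n).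
  move=> i; have [g hg] := choice (fun n => SY _ (hS _ (imageT _ n)) i).
  by exists g.
have [p [pU pfree p_lim]] := psi_sequences_ultrafilter_limits AA_mad G cardI.
have /choice [x hx] := p_lim.
have x_acc : acc_point (product_open (@psi_open AA) I) (range h) x.
  apply: ultrafilter_limit_acc_point pfree h_inj _ => i W Wo Wx.
  by under eq_set => n do rewrite hG; exact: hx.
exists x => U Uo Ux; have [y [hy [yx Uy]]] := x_acc U Uo Ux.
by exists y; split => //; exact: hS.
Qed.

Lemma psi_kappa_ostar_pseudocompact (AA : set (set nat)) (I : Type) :
  mad_family AA -> has_card_t I -> kappa_ostar_pseudocompact (@psi_open AA) I.
Proof.
move=> AA_mad cardI V V_open.
have /choice [G hG] : forall a, exists g : nat -> nat, forall n, V a n (PN AA (g n)).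
  move=> a; have [g hg] := choice (fun n => psi_open_meets_omega AA_mad
    (V_open a n).1 (V_open a n).2).
  by exists g.
have [p [pU pfree p_lim]] := psi_sequences_ultrafilter_limits AA_mad G cardI.
exists p; split; first exact: frechet_ultrafilter_free.
move=> a; have [x hx] := p_lim a; exists x => W Wo Wx.
by apply: filterS (hx W Wo Wx) => n Wn; exists (PN AA (G a n)).
Qed.

Theorem lemma3p7 (AA : set (set nat)) (I : Type) :
  mad_family AA -> has_card_t I ->
  rel_countably_compact (product_open (@psi_open AA) I) (omega_pow AA I) /\
  kappa_ostar_pseudocompact (@psi_open AA) I.
Proof.
move=> AA_mad cardI; split.
- exact: omega_pow_rel_countably_compact.
- exact: psi_kappa_ostar_pseudocompact.
Qed.
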